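(* Let $A$ be a meet-complemented lattice in which $\Box x$ and $\Diamond x$ exist for every $x\in A$, and let $a,b\in A$. Then (i) $\neg\neg a\le\Box\Diamond a$; (ii) $\Box a\le\Box\Diamond a$; (B1) $a\le\Box\Diamond a$; (B2) $\Diamond\Box a\le a$; (A) $\Diamond a\le b$ if and only if $a\le\Box b$; (iii) $\Diamond\Box\Diamond a=\Diamond a$ and $\Box\Diamond\Box a=\Box a$.
   Context: A meet-complemented lattice is a lattice $(L,\le)$ (not necessarily distributive) such that for every $a\in L$ the element $\neg a=\max\{b\in L: a\wedge b\le c\ \text{for all } c\in L\}$ exists; it is bounded with bottom $0$ and top $1$. For $a\in L$, $\Box a=\max\{b\in L: a\vee\neg b=1\}$ and $\Diamond a=\min\{b\in L: \neg a\vee b=1\}$. *)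

From HB Require Import structures.
From mathcomp Require Import all_boot all_order.
Set Implicit Arguments. Unset Strict Implicit. Unset Printing Implicit Defensive.
Import Order.TTheory.
Local Open Scope order_scope.

Definition is_max d (T : porderType d) (P : T -> Prop) (m : T) : Prop :=
  P m /\ forall b, P b -> b <= m.
Definition is_min d (T : porderType d) (P : T -> Prop) (m : T) : Prop :=
  P m /\ forall b, P b -> m <= b.

Definition meet_complement d (T : tbLatticeType d) (neg : T -> T) : Prop :=
  forall a : T, is_max (fun b => forall c : T, a `&` b <= c) (neg a).

Definition is_box d (T : tbLatticeType d) (neg box : T -> T) : Prop :=
  forall a : T, is_max (fun b => a `|` neg b = \top) (box a).

Definition is_dia d (T : tbLatticeType d) (neg dia : T -> T) : Prop :=
  forall a : T, is_min (fun b => neg a `|` b = \top) (dia a).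

From HB Require Import structures.
From mathcomp Require Import all_boot all_order.
Import Order.TTheory.
Local Open Scope order_scope.
Set Implicit Arguments. Unset Strict Implicit.

(* The top-join conditions defining the modalities are upward closed in the
   relevant argument ([neg] being antitone), so they characterise the
   modalities order-theoretically: [y <= box x] iff [x `|` neg y = \top], and
   [dia x <= y] iff [neg x `|` y = \top].  The two right-hand sides agree, so
   [dia] and [box] form a Galois connection, which gives (A), (B1), (B2) and
   the triangle identities (iii).  For (i) it suffices that
   [dia a `|` neg (neg (neg a)) = \top], as [neg a <= neg (neg (neg a))];
   (ii) then follows from [box a <= neg (neg a)]. *)

Section BoundedLattice.
Variables (d : Order.disp_t) (A : tbLatticeType d).

Lemma le_joinl_top (u v w : A) : u <= v -> u `|` w = \top -> v `|` w = \top.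
Proof.
move=> le_uv uw1; apply/le_anti; rewrite lex1 /= -uw1.
by rewrite leUx leUr andbT (le_trans le_uv (leUl _ _)).
Qed.

End BoundedLattice.

Section MeetComplement.
Variables (d : Order.disp_t) (A : tbLatticeType d) (neg : A -> A).
Hypothesis Hneg : meet_complement neg.

Lemma le_neg (x y : A) : (y <= neg x) <-> (x `&` y = \bot).
Proof.
split=> [le_y_negx | xy0].
- apply/eqP; rewrite -lex0; apply: le_trans (proj1 (Hneg x) \bot).
  by rewrite lexI leIl /= (le_trans (leIr _ _) le_y_negx).
- by apply: (proj2 (Hneg x)) => c; rewrite xy0 le0x.
Qed.

Lemma neg_anti (x y : A) : x <= y -> neg y <= neg x.
Proof.
move=> le_xy; apply/le_neg/eqP; rewrite -lex0.
apply: le_trans (proj1 (Hneg y) \bot).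
by rewrite lexI leIr /= (le_trans (leIl _ _) le_xy).
Qed.

Lemma le_negneg (x : A) : x <= neg (neg x).
Proof. by apply/le_neg; rewrite meetC; apply/le_neg. Qed.

End MeetComplement.

Section Modalities.
Variables (d : Order.disp_t) (A : tbLatticeType d) (neg box dia : A -> A).
Hypotheses (Hneg : meet_complement neg) (Hbox : is_box neg box)
  (Hdia : is_dia neg dia).

Lemma le_box (x y : A) : (y <= box x) <-> (x `|` neg y = \top).
Proof.
split=> [le_y_boxx | ?]; last exact: (proj2 (Hbox x)).
rewrite joinC; apply: le_joinl_top (neg_anti Hneg le_y_boxx) _.
by rewrite joinC; exact: (proj1 (Hbox x)).
Qed.

Lemma dia_le (x y : A) : (dia x <= y) <-> (neg x `|` y = \top).
Proof.
split=> [le_diax_y | ?]; last exact: (proj2 (Hdia x)).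
rewrite joinC; apply: le_joinl_top le_diax_y _.
by rewrite joinC; exact: (proj1 (Hdia x)).
Qed.

Lemma dia_le_box (x y : A) : (dia x <= y) <-> (x <= box y).
Proof.
split=> [/dia_le | /le_box]; rewrite joinC => ?; [exact/le_box | exact/dia_le].
Qed.

Lemma le_box_dia (x : A) : x <= box (dia x).
Proof. exact/dia_le_box. Qed.

Lemma dia_box_le (x : A) : dia (box x) <= x.
Proof. exact/dia_le_box. Qed.

Lemma dia_mono (x y : A) : x <= y -> dia x <= dia y.
Proof. by move=> le_xy; apply/dia_le_box; apply: le_trans le_xy (le_box_dia y). Qed.

Lemma box_mono (x y : A) : x <= y -> box x <= box y.
Proof. by move=> le_xy; apply/dia_le_box; apply: le_trans (dia_box_le x) le_xy. Qed.

Lemma dia_box_dia (x : A) : dia (box (dia x)) = dia x.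
Proof. by apply/le_anti; rewrite dia_box_le dia_mono ?le_box_dia. Qed.

Lemma box_dia_box (x : A) : box (dia (box x)) = box x.
Proof. by apply/le_anti; rewrite le_box_dia box_mono ?dia_box_le. Qed.

Lemma box_le_negneg (x : A) : box x <= neg (neg x).
Proof.
apply/(le_neg Hneg); set z := neg x `&` box x.
(* [neg z] lies above both [x] and [neg (box x)], whose join is [\top]. *)
have negz1 : neg z = \top.
  have le_x_negz : x <= neg z.
    exact: le_trans (le_negneg Hneg x) (neg_anti Hneg (leIl _ _)).
  apply/le_anti; rewrite lex1 /= -(proj1 (Hbox x)) leUx le_x_negz /=.
  by apply: neg_anti Hneg _ _ _; rewrite /z leIr.
by have /(le_neg Hneg) := le_negneg Hneg z; rewrite negz1 meet1x; apply.
Qed.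

Lemma negneg_le_box_dia (x : A) : neg (neg x) <= box (dia x).
Proof.
apply/le_box; rewrite joinC; apply: le_joinl_top (le_negneg Hneg (neg x)) _.
exact/dia_le.
Qed.

Lemma box_le_box_dia (x : A) : box x <= box (dia x).
Proof. exact: le_trans (box_le_negneg x) (negneg_le_box_dia x). Qed.

End Modalities.

Theorem lemma14 (d : Order.disp_t) (A : tbLatticeType d) (neg box dia : A -> A)
  (Hneg : meet_complement neg) (Hbox : is_box neg box) (Hdia : is_dia neg dia)
  (a b : A) :
  [/\ neg (neg a) <= box (dia a),
      box a <= box (dia a),
      a <= box (dia a),
      dia (box a) <= a
    & [/\ (dia a <= b <-> a <= box b),
           dia (box (dia a)) = dia a
         & box (dia (box a)) = box a]].
Proof.
split; last split.
- exact: negneg_le_box_dia Hneg Hbox Hdia a.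
- exact: box_le_box_dia Hneg Hbox Hdia a.
- exact: le_box_dia Hneg Hbox Hdia a.
- exact: dia_box_le Hneg Hbox Hdia a.
- exact: dia_le_box Hneg Hbox Hdia a b.
- exact: dia_box_dia Hneg Hbox Hdia a.
- exact: box_dia_box Hneg Hbox Hdia a.
Qed.
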